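(* Let $(X,x)$ be a pointed diffeological space and let $A$ be a $D$-open neighbourhood of $x$ in $X$, equipped with the sub-diffeology of $X$. Then the inclusion map $A\hookrightarrow X$ induces an isomorphism $T_x(A)\cong T_x(X)$.
   Context: A diffeological space is a set $X$ together with, for every open subset $U$ of every $\mathbb{R}^n$, a set of functions $U\to X$ called plots, such that constant maps are plots, the composite of a plot with a smooth map between open subsets of Euclidean spaces is a plot, and a function which is locally a plot is a plot; smooth maps send plots to plots. The $D$-topology on $X$ is the final topology with respect to all plots; a subset is $D$-open if its preimage under every plot is open. The sub-diffeology on $A\subseteq X$ consists of all maps $U\to A$ whose composite with the inclusion is a plot of $X$. The internal tangent space $T_x(X)$ is the colimit in the category of real vector spaces of the functor on the category whose objects are plots $p:U\to X$ with $U$ a connected open neighbourhood of $0$ in some $\mathbb{R}^n$ and $p(0)=x$, and whose morphisms $p\to q$ (for $q:V\to X$) are smooth maps $f:U\to V$ with $f(0)=0$ and $q\circ f=p$, sending $p$ to $T_0(U)$ and $f$ to $f_*:T_0(U)\to T_0(V)$. Smooth pointed maps induce linear maps between internal tangent spaces. *)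

From HB Require Import structures.
From mathcomp Require Import all_boot all_order all_algebra.
From mathcomp Require Import all_classical all_reals all_analysis.
Set Implicit Arguments. Unset Strict Implicit. Unset Printing Implicit Defensive.
Import Order.TTheory GRing.Theory Num.Theory.
Import numFieldNormedType.Exports.
Local Open Scope classical_set_scope.
Local Open Scope ring_scope.

Section Diffeology.
Variable R : realType.

Definition ebasis (n : nat) (i : 'I_n) : 'rV[R]_n := delta_mx 0 i.

Fixpoint iterD (n m : nat) (l : seq 'I_n) (f : 'rV[R]_n -> 'rV[R]_m)
  : 'rV[R]_n -> 'rV[R]_m :=
  match l with
  | [::] => f
  | i :: l' => fun a => derive (iterD l' f) a (ebasis i)
  end.

Definition smooth_on (n m : nat) (U : set 'rV[R]_n) (f : 'rV[R]_n -> 'rV[R]_m) : Prop :=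
  forall l : seq 'I_n,
    (forall a, U a -> {for a, continuous (iterD l f)}) /\
    (forall (i : 'I_n) a, U a -> derivable (iterD l f) a (ebasis i)).

(* A diffeology on X: plot n U p means p restricted to the open U ⊆ R^n is a plot *)
Record diffeology (X : Type) := Diffeology {
  plot : forall n : nat, set 'rV[R]_n -> ('rV[R]_n -> X) -> Prop;
  plot_open : forall n U p, @plot n U p -> open U;
  plot_ext : forall n U (p q : 'rV[R]_n -> X), plot U p ->
      (forall u, U u -> p u = q u) -> plot U q;
  plot_const : forall n (U : set 'rV[R]_n) (x : X), open U -> plot U (fun _ => x);
  plot_comp : forall n m (U : set 'rV[R]_n) (V : set 'rV[R]_m) p
      (f : 'rV[R]_m -> 'rV[R]_n),
      plot U p -> open V -> smooth_on V f -> (forall v, V v -> U (f v)) ->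
      plot V (p \o f);
  plot_local : forall n (U : set 'rV[R]_n) p, open U ->
      (forall u, U u -> exists W : set 'rV[R]_n,
          [/\ open W, W u, W `<=` U & plot W p]) -> plot U p
}.

Definition D_open (X : Type) (D : diffeology X) (A : set X) : Prop :=
  forall n (U : set 'rV[R]_n) p, plot D U p -> open (U `&` p @^-1` A).

Section Sub.
Variables (X : Type) (D : diffeology X) (A : set X).
Definition sub_plot n (U : set 'rV[R]_n) (p : 'rV[R]_n -> {y : X | A y}) : Prop :=
  plot D U (fun u => proj1_sig (p u)).

Lemma sub_plot_open n U p : @sub_plot n U p -> open U.
Proof. exact: plot_open. Qed.
Lemma sub_plot_ext n U (p q : 'rV[R]_n -> {y : X | A y}) :
  sub_plot U p -> (forall u, U u -> p u = q u) -> sub_plot U q.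
Proof. by move=> h e; apply: (plot_ext h) => u /e ->. Qed.
Lemma sub_plot_const n (U : set 'rV[R]_n) x : open U -> sub_plot U (fun _ => x).
Proof. exact: plot_const. Qed.
Lemma sub_plot_comp n m (U : set 'rV[R]_n) (V : set 'rV[R]_m) p f :
  sub_plot U p -> open V -> smooth_on V f -> (forall v, V v -> U (f v)) ->
  sub_plot V (p \o f).
Proof. by move=> h oV sf fV; apply: (plot_comp h oV sf fV). Qed.
Lemma sub_plot_local n (U : set 'rV[R]_n) p : open U ->
  (forall u, U u -> exists W : set 'rV[R]_n, [/\ open W, W u, W `<=` U & sub_plot W p]) ->
  sub_plot U p.
Proof. by move=> oU h; apply: plot_local. Qed.

Definition sub_diffeology : diffeology {y : X | A y} :=
  Diffeology sub_plot_open sub_plot_ext sub_plot_const sub_plot_comp sub_plot_local.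
End Sub.

Section Tangent.
Variables (X : Type) (D : diffeology X) (x : X).

Definition tobj n (U : set 'rV[R]_n) (p : 'rV[R]_n -> X) : Prop :=
  [/\ open U, connected U, U 0, plot D U p & p 0 = x].

Definition tmor n m (U : set 'rV[R]_n) (p : 'rV[R]_n -> X)
    (V : set 'rV[R]_m) (q : 'rV[R]_m -> X) (f : 'rV[R]_n -> 'rV[R]_m) : Prop :=
  [/\ smooth_on U f, (forall u, U u -> V (f u)), f 0 = 0
    & forall u, U u -> q (f u) = p u].

Definition is_linear (V W : lmodType R) (h : V -> W) : Prop :=
  forall (a : R) (u v : V), h (a *: u + v) = a *: h u + h v.

(* a cocone of the functor p |-> T_0(U) = R^n, f |-> f_* = d f(0) *)
Definition tcocone (W : lmodType R)
    (c : forall n, set 'rV[R]_n -> ('rV[R]_n -> X) -> 'rV[R]_n -> W) : Prop :=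
  (forall n U p, @tobj n U p -> is_linear (c n U p)) /\
  (forall n m U p V q f, @tobj n U p -> @tobj m V q -> tmor U p V q f ->
     forall v : 'rV[R]_n, c m V q (derive f 0 v) = c n U p v).

(* (T, c) is a colimit of this diagram, i.e. T is (a model of) T_x(X) *)
Definition is_tangent_space (T : lmodType R)
    (c : forall n, set 'rV[R]_n -> ('rV[R]_n -> X) -> 'rV[R]_n -> T) : Prop :=
  tcocone c /\
  forall (W : lmodType R) d, tcocone d ->
    exists! h : T -> W, is_linear h /\
      forall n U p, @tobj n U p -> forall v, h (c n U p v) = d n U p v.
End Tangent.
End Diffeology.

From Pilot Require Import Defs.
From HB Require Import structures.
From mathcomp Require Import all_boot all_order all_algebra.
From mathcomp Require Import all_classical all_reals all_analysis.
Set Implicit Arguments. Unset Strict Implicit. Unset Printing Implicit Defensive.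
Import Order.TTheory GRing.Theory Num.Theory.
Import numFieldNormedType.Exports.
Local Open Scope classical_set_scope.
Local Open Scope ring_scope.

(* Since A is D-open, every pointed plot p of X at x maps a small ball around 0
   into A, and the diagram of T_x(X) only sees germs at 0: restricting to that
   ball turns p into a plot of A, and the inclusion into a plot of X, without
   changing the classes in the colimit. Restriction therefore extends every
   cocone over the diagram of A to one over the diagram of X, which yields an
   inverse of the induced map. *)

Lemma ball_connected (R : realType) n (r : R) : connected (ball (0 : 'rV[R]_n) r).
Proof.
have -> : ball (0 : 'rV[R]_n) r =
  \bigcup_(y in ball (0 : 'rV[R]_n) r) ((fun t : R => t *: y) @` `[0, 1]%classic).
  apply/seteqP; split => z.
    move=> hz; exists z => //; exists 1; last by rewrite scale1r.
    by rewrite /= in_itv /= ler01 lexx.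
  move=> [y hy [t ht <-]].
  move: hy; rewrite -ball_normE /ball_ /= !sub0r !normrN normrZ => hy.
  move: ht; rewrite /= in_itv /= => /andP[t0 t1].
  rewrite ger0_norm //; apply: le_lt_trans hy.
  by rewrite -[leRHS]mul1r ler_wpM2r.
apply: bigcup_connected.
  exists 0 => y _; exists 0; last by rewrite scale0r.
  by rewrite /= in_itv /= lexx ler01.
move=> y _; apply: connected_continuous_connected; first exact: segment_connected.
by apply: continuous_subspaceT => t; exact: scalel_continuous.
Qed.

Lemma iterD_id (R : realType) n (l : seq 'I_n) :
  Defs.iterD l (@id 'rV[R]_n) = id \/ exists c, Defs.iterD l (@id 'rV[R]_n) = cst c.
Proof.
elim: l => [|i l [IH|[c IH]]] /=; first by left.
  by right; exists (ebasis R i); apply: funext => a; rewrite IH; exact: derive_id.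
by right; exists 0; apply: funext => a; rewrite IH; exact: derive_cst.
Qed.

Lemma smooth_on_id (R : realType) n (U : set 'rV[R]_n) : smooth_on U id.
Proof.
move=> l; have [->|[c ->]] := iterD_id R l; split.
- by move=> a _; exact: cvg_id.
- by move=> i a _; exact: derivable_id.
- by move=> a _; apply: cst_continuous.
- by move=> i a _; exact: derivable_cst.
Qed.

Lemma smooth_onS (R : realType) n m (U B : set 'rV[R]_n) (f : 'rV[R]_n -> 'rV[R]_m) :
  B `<=` U -> smooth_on U f -> smooth_on B f.
Proof.
move=> BU sf l; have [h1 h2] := sf l; split.
- by move=> a /BU; exact: h1.
- by move=> i a /BU; exact: h2.
Qed.

Lemma plotS (R : realType) (Y : Type) (D : diffeology R Y) n
  (U B : set 'rV[R]_n) p : open B -> B `<=` U -> plot D U p -> plot D B p.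
Proof.
move=> oB BU hp.
by apply: (plot_ext (plot_comp hp oB (smooth_on_id B) BU)).
Qed.

Section TangentColimit.
Variables (R : realType) (Y : Type) (D : diffeology R Y) (y : Y).

(* The inclusion of a smaller neighbourhood of 0 is a morphism of the diagram
   whose differential at 0 is the identity. *)
Lemma tcoconeS (T : lmodType R) c : tcocone D y (W := T) c ->
  forall n (U B : set 'rV[R]_n) p q, tobj D y U p -> tobj D y B q ->
  B `<=` U -> (forall u, B u -> p u = q u) -> forall v, c n U p v = c n B q v.
Proof.
move=> [_ cc] n U B p q hU hB BU pq v.
have hid : tmor B q U p id by split => //; exact: smooth_on_id.
by have := cc n n B q U p id hB hU hid v; rewrite derive_id.
Qed.

Lemma tangent_endo_id (T : lmodType R) c : is_tangent_space D y (T := T) c ->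
  forall k : T -> T, is_linear k ->
  (forall n U p, tobj D y U p -> forall v, k (c n U p v) = c n U p v) -> k =1 id.
Proof.
move=> [cc univ] k klin kc t.
have [k0 [_ k0_uniq]] := univ T c cc.
by rewrite -(k0_uniq k (conj klin kc)) (k0_uniq id).
Qed.

End TangentColimit.

Section OpenSubspace.
Variables (R : realType) (X : Type) (D : diffeology R X) (x : X) (A : set X).
Hypotheses (hA : D_open D A) (hx : A x).

Let DA := sub_diffeology D A.
Let xA : {y : X | A y} := exist A x hx.

(* A retraction of X onto A, with junk value xA outside A. *)
Definition into_sub (y : X) : {y : X | A y} :=
  match pselect (A y) with left Ay => exist A y Ay | right _ => xA end.

Lemma into_subK (y : X) : A y -> proj1_sig (into_sub y) = y.
Proof. by move=> Ay; rewrite /into_sub; case: pselect. Qed.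

Lemma val_into_sub (z : {y : X | A y}) : into_sub (proj1_sig z) = z.
Proof.
case: z => y Ay; rewrite /into_sub /=; case: pselect => Ay' //.
by congr exist; exact: Prop_irrelevance.
Qed.

Lemma tobj_val n (U : set 'rV[R]_n) q :
  tobj DA xA U q -> tobj D x U (fun u => proj1_sig (q u)).
Proof. by move=> [oU cU U0 pq q0]; split => //; rewrite q0. Qed.

Definition sub_radius n (U : set 'rV[R]_n) (p : 'rV[R]_n -> X) : R :=
  xget 1 [set r : R | 0 < r /\ ball 0 r `<=` U `&` p @^-1` A].

Lemma sub_radius_spec n (U : set 'rV[R]_n) p : tobj D x U p ->
  0 < sub_radius U p /\ ball 0 (sub_radius U p) `<=` U `&` p @^-1` A.
Proof.
move=> [_ _ U0 pp p0].
apply: (@xgetPex _ 1 [set r : R | 0 < r /\ ball 0 r `<=` U `&` p @^-1` A]).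
have : nbhs (0 : 'rV[R]_n) (U `&` p @^-1` A).
  by apply: open_nbhs_nbhs; split; [exact: hA pp | by rewrite /preimage /= p0].
by move/nbhs_ballP => [r r0 hr]; exists r.
Qed.

Lemma tobj_into_sub n (U : set 'rV[R]_n) p r : tobj D x U p -> 0 < r ->
  ball 0 r `<=` U `&` p @^-1` A -> tobj DA xA (ball 0 r) (into_sub \o p).
Proof.
move=> [_ _ _ pp p0] r0 hr; split.
- exact: ball_open.
- exact: ball_connected.
- exact: ballxx.
- apply: (plot_ext (p := p)); first by apply: plotS pp => [|u /hr []]; [exact: ball_open|].
  by move=> u /hr [_ Au]; rewrite /= into_subK.
- by rewrite /= p0 (val_into_sub xA).
Qed.

Section ExtendCocone.
Variables (T : lmodType R) (c : forall n, set 'rV[R]_n -> ('rV[R]_n -> {y : X | A y}) -> 'rV[R]_n -> T).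
Hypothesis cc : tcocone DA xA c.

Definition extend_cocone n (U : set 'rV[R]_n) (p : 'rV[R]_n -> X) : 'rV[R]_n -> T :=
  c (ball 0 (sub_radius U p)) (into_sub \o p).

Lemma extend_coconeE n (U : set 'rV[R]_n) p r v : tobj D x U p -> 0 < r ->
  ball 0 r `<=` U `&` p @^-1` A ->
  extend_cocone U p v = c (ball 0 r) (into_sub \o p) v.
Proof.
move=> hp r0 hr; have [s0 hs] := sub_radius_spec hp.
have ho_r := tobj_into_sub hp r0 hr; have ho_s := tobj_into_sub hp s0 hs.
have [rs|sr] := leP r (sub_radius U p).
  by rewrite /extend_cocone (tcoconeS cc ho_s ho_r) //; apply: le_ball.
by rewrite /extend_cocone (tcoconeS cc ho_r ho_s) //; apply: le_ball; exact: ltW.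
Qed.

Lemma extend_cocone_val n (U : set 'rV[R]_n) q v : tobj DA xA U q ->
  extend_cocone U (fun u => proj1_sig (q u)) v = c U q v.
Proof.
move=> hq; have [r0 hr] := sub_radius_spec (tobj_val hq).
rewrite /extend_cocone (tcoconeS cc hq (tobj_into_sub (tobj_val hq) r0 hr)) //.
- by move=> u /hr [].
- by move=> u _; rewrite /= val_into_sub.
Qed.

Lemma tcocone_extend : tcocone D x extend_cocone.
Proof.
split=> [n U p hp|n m U p V q f hp hq [sf _ f0 qf] v].
  by have [r0 hr] := sub_radius_spec hp; exact: (cc.1 _ _ _ (tobj_into_sub hp r0 hr)).
have [r0 hr] := sub_radius_spec hp; have [s0 hs] := sub_radius_spec hq.
have cf : {for 0, continuous f} by have [+ _] := sf [::]; apply; case: hp.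
have : nbhs (0 : 'rV[R]_n) (f @^-1` ball 0 (sub_radius V q)).
  by apply: cf; rewrite f0; exact: nbhsx_ballx.
move/nbhs_ballP => [r1 r1_gt0 hr1].
pose r := Order.min (sub_radius U p) r1.
have r_gt0 : 0 < r by rewrite lt_min r0 r1_gt0.
have hrU : ball (0 : 'rV[R]_n) r `<=` U `&` p @^-1` A.
  by move=> u /(le_ball (_ : r <= _)) /hr; apply; rewrite ge_min lexx.
have hrf : ball (0 : 'rV[R]_n) r `<=` f @^-1` ball 0 (sub_radius V q).
  by move=> u /(le_ball (_ : r <= r1)) /hr1; apply; rewrite ge_min lexx orbT.
rewrite (extend_coconeE v hp r_gt0 hrU).
apply: (cc.2 _ _ _ _ _ _ f (tobj_into_sub hp r_gt0 hrU) (tobj_into_sub hq s0 hs)).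
split=> //.
- by apply: smooth_onS sf => u /hrU [].
- by move=> u /hrU [Uu _]; rewrite /= qf.
Qed.

End ExtendCocone.

Lemma tcocone_val_into_sub (T : lmodType R) c n (U : set 'rV[R]_n) p v :
  tcocone D x (W := T) c -> tobj D x U p ->
  c n (ball 0 (sub_radius U p)) (fun u => proj1_sig ((into_sub \o p) u)) v = c n U p v.
Proof.
move=> cc hp; have [r0 hr] := sub_radius_spec hp.
symmetry; apply: (tcoconeS cc hp (tobj_val (tobj_into_sub hp r0 hr))).
- by move=> u /hr [].
- by move=> u /hr [_ Au]; rewrite into_subK.
Qed.

End OpenSubspace.

Theorem proposition3p6 (R : realType) (X : Type) (D : diffeology R X) (x : X)
  (A : set X) (hA : D_open D A) (hx : A x)
  (TA : lmodType R)
  (cA : forall n, set 'rV[R]_n -> ('rV[R]_n -> {y : X | A y}) -> 'rV[R]_n -> TA)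
  (TX : lmodType R)
  (cX : forall n, set 'rV[R]_n -> ('rV[R]_n -> X) -> 'rV[R]_n -> TX) :
  is_tangent_space (sub_diffeology D A) (exist A x hx) cA ->
  is_tangent_space D x cX ->
  forall h : TA -> TX, is_linear h ->
    (forall n (U : set 'rV[R]_n) p, tobj (sub_diffeology D A) (exist A x hx) U p ->
       forall v, h (cA n U p v) = cX n U (fun u => proj1_sig (p u)) v) ->
    bijective h.
Proof.
move=> tA tX h hlin hspec.
have ccA := tA.1; have ccX := tX.1.
have [g [[glin gspec] _]] := tX.2 TA _ (tcocone_extend hA ccA).
exists g.
- apply: (tangent_endo_id tA) => [a u v|n U q hq v] /=; first by rewrite hlin glin.
  rewrite hspec // gspec; last exact: tobj_val.
  by rewrite (extend_cocone_val hA ccA v hq).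
- apply: (tangent_endo_id tX) => [a u v|n U p hp v] /=; first by rewrite glin hlin.
  have [r0 hr] := sub_radius_spec hA hx hp.
  rewrite gspec // /extend_cocone hspec; last exact: tobj_into_sub hp r0 hr.
  by rewrite (tcocone_val_into_sub hA hx v ccX hp).
Qed.
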